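(* The graph $H_7$ has rank cardinality vector $(2,2,2,1)$, and every graph whose rank cardinality vector is $(2,2,2,1)$ is isomorphic to $H_7$.
   Context: All graphs are finite, nonempty, and reflexive (every vertex has a loop). $N[v]$ is the closed neighborhood of $v$ (including $v$). For distinct $v,w$, $w$ strictly corners $v$ if $N[v]\subsetneq N[w]$; $v$ is then a strict corner. Corner ranking: set $G^{(1)}=G$, $k=1$. If $G^{(k)}$ is a clique, give all its vertices rank $k$ and stop. Else if $G^{(k)}$ has no strict corners, give all its vertices rank $\infty$ and stop. Else give every strict corner of $G^{(k)}$ rank $k$, delete them to get $G^{(k+1)}$ (induced subgraph), increase $k$ and repeat. The corner rank is the largest rank of a vertex; $X_k$ is the set of rank-$k$ vertices. The rank cardinality vector of a graph of finite corner rank $\alpha$ is $(x_\alpha,\dots,x_1)$ with $x_k=|X_k|$. $H_7$ is the graph on vertices $a_1,a_2,b_1,b_2,c_1,c_2,d$ with edges $a_1a_2,a_1b_1,a_1b_2,a_2b_1,a_2b_2,a_2c_1,a_1c_2,b_1c_1,b_1c_2,b_1d,b_2c_1,b_2c_2,c_1d,c_2d$. *)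

From HB Require Import structures.
From mathcomp Require Import all_boot.
Set Implicit Arguments. Unset Strict Implicit. Unset Printing Implicit Defensive.

(* A graph is a finite type T of vertices with an adjacency relation e : rel T,
   assumed symmetric and reflexive (every vertex has a loop); hypotheses are
   stated in the theorem. *)
Section CornerRanking.
Variables (T : finType) (e : rel T).

Definition nbhd (S : {set T}) (v : T) : {set T} := [set w in S | e v w].

Definition strict_corner (S : {set T}) (v : T) : bool :=
  (v \in S) && [exists w in S, (w != v) && (nbhd S v \proper nbhd S w)].

Definition corners (S : {set T}) : {set T} := [set v | strict_corner S v].

Definition is_clique (S : {set T}) : bool :=
  [forall v in S, forall w in S, e v w].

(* one step of the ranking process (the clique case stops the process) *)
Definition rank_step (S : {set T}) : {set T} :=
  if is_clique S then set0 else S :\: corners S.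

(* Gk k = G^(k) for k >= 1 (Gk 1 = the whole vertex set) *)
Definition Gk (k : nat) : {set T} := iter k.-1 rank_step [set: T].

(* X_k = the set of vertices of rank k (k >= 1, finite ranks) *)
Definition Xk (k : nat) : {set T} :=
  if is_clique (Gk k) then Gk k else corners (Gk k).

Definition corner_rank_is (alpha : nat) : Prop :=
  [/\ 0 < alpha, Gk alpha != set0, is_clique (Gk alpha) &
      forall k, 0 < k < alpha -> ~~ is_clique (Gk k) /\ corners (Gk k) != set0].

Definition rank_card_vector (v : seq nat) : Prop :=
  exists alpha, corner_rank_is alpha /\
    v = [seq #|Xk k| | k <- rev (iota 1 alpha)].

End CornerRanking.

Definition graph_iso (T1 T2 : finType) (e1 : rel T1) (e2 : rel T2) : Prop :=
  exists f : T1 -> T2, bijective f /\ forall x y, e1 x y = e2 (f x) (f y).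

Inductive H7v := a1 | a2 | b1 | b2 | c1 | c2 | d.

Definition H7v_to (x : H7v) : 'I_7 :=
  match x with
  | a1 => inord 0 | a2 => inord 1 | b1 => inord 2 | b2 => inord 3
  | c1 => inord 4 | c2 => inord 5 | d => inord 6 end.
Definition H7v_of (i : 'I_7) : H7v :=
  match val i with
  | 0 => a1 | 1 => a2 | 2 => b1 | 3 => b2 | 4 => c1 | 5 => c2 | _ => d end.
Lemma H7v_toK : cancel H7v_to H7v_of.
Proof. by case; rewrite /H7v_of /= inordK. Qed.

HB.instance Definition _ := Finite.copy H7v (can_type H7v_toK).

Definition H7_edges : seq (H7v * H7v) :=
  [:: (a1,a2); (a1,b1); (a1,b2); (a2,b1); (a2,b2); (a2,c1); (a1,c2);
      (b1,c1); (b1,c2); (b1,d); (b2,c1); (b2,c2); (c1,d); (c2,d)].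

Definition H7_adj : rel H7v := fun x y =>
  (x == y) || ((x, y) \in H7_edges) || ((y, x) \in H7_edges).

(* The vertices of rank k form the level X_k, and G^(k) is the union of the
   levels >= k.  Hence a graph with rank cardinality vector (2,2,2,1) is in
   bijection with the vertices of H_7 so that X_4, X_3, X_2, X_1 go to {a1,a2},
   {b1,b2}, {c1,c2}, {d}.  Transported along this bijection it becomes a graph on
   the vertices of H_7 in which a1 ~ a2 and, for k = 3, 2, 1, the strict corners
   among the vertices of level >= k are exactly those of level k.  The condition
   at level k only involves edges between vertices of level >= k, so these graphs
   can be enumerated level by level, pruning as soon as a condition fails: four
   survive, each isomorphic to H_7 by swapping vertices inside levels.
   Conversely H_7 satisfies the conditions, which yields its rank vector. *)

From HB Require Import structures.
From mathcomp Require Import all_boot.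
Set Implicit Arguments. Unset Strict Implicit. Unset Printing Implicit Defensive.

Section Corners.
Variables (T : finType) (e : rel T).

Lemma corners_sub S : corners e S \subset S.
Proof. by apply/subsetP => v; rewrite inE => /andP[]. Qed.

Lemma Xk_sub k : Xk e k \subset Gk e k.
Proof. by rewrite /Xk; case: ifP => _; [exact: subxx | exact: corners_sub]. Qed.

Lemma corners_clique S : is_clique e S -> corners e S = set0.
Proof.
move=> /forall_inP cl; apply/setP => v; rewrite !inE /strict_corner.
have nbhdS w : w \in S -> nbhd e S w = S.
  move=> wS; apply/setP => x; rewrite inE andb_idr // => xS.
  exact: (forall_inP (cl w wS)).
case vS: (v \in S) => //=; apply/existsP => -[w /and3P[wS _]].
by rewrite !nbhdS // properxx.
Qed.

(* [w != v] is implied by the strict inclusion of neighbourhoods. *)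
Lemma strict_cornerE S v :
  strict_corner e S v = (v \in S) && [exists w in S, nbhd e S v \proper nbhd e S w].
Proof.
rewrite /strict_corner; congr (_ && _); apply: eq_existsb => w.
case: eqVneq => [->|_]; last by [].
by rewrite properxx andbF.
Qed.

Lemma Gk_succ k : 0 < k -> Gk e k.+1 = rank_step e (Gk e k).
Proof. by case: k. Qed.

Lemma Gk_subset i j : 0 < i <= j -> Gk e j \subset Gk e i.
Proof.
move=> /andP[i_gt0]; elim: j => [|j IH]; first by rewrite leqn0 => /eqP ->.
rewrite leq_eqVlt => /orP[/eqP -> // | ij]; apply: subset_trans (IH ij).
rewrite Gk_succ ?(leq_trans i_gt0 ij) // /rank_step.
by case: ifP => _; [exact: sub0set | exact: subsetDl].
Qed.

Section LevelFunction.
Variables (L : T -> nat) (alpha : nat).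
Hypotheses (L_range : forall v, 0 < L v <= alpha)
  (top_clique : is_clique e [set v | alpha <= L v])
  (top_nonempty : [set v | alpha <= L v] != set0)
  (corners_levels : forall k, 0 < k < alpha ->
     corners e [set v | k <= L v] = [set v | L v == k])
  (levels_nonempty : forall k, 0 < k < alpha -> [set v | L v == k] != set0).

Lemma Gk_levels k : 0 < k <= alpha -> Gk e k = [set v | k <= L v].
Proof.
elim: k => // k IH /andP[_ k_le]; case: k IH k_le => [_ _ | k IH k_lt].
  by apply/setP => v; rewrite !inE (andP (L_range v)).1.
have k_lt' : 0 < k.+1 < alpha by [].
have not_clique : ~~ is_clique e [set v | k.+1 <= L v].
  apply: contra (levels_nonempty k_lt') => /corners_clique.
  by rewrite corners_levels // => ->.
rewrite Gk_succ // IH ?(ltnW k_lt) // /rank_step (negbTE not_clique).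
rewrite corners_levels //; apply/setP => v; rewrite !inE.
by rewrite eq_sym -ltn_neqAle.
Qed.

Lemma corner_rank_of_levels :
  corner_rank_is e alpha /\ forall k, 0 < k <= alpha -> Xk e k = [set v | L v == k].
Proof.
have alpha_gt0 : 0 < alpha.
  by case/set0Pn: top_nonempty => v _; case/andP: (L_range v) => /leq_trans; apply.
have G_low k : 0 < k < alpha -> Gk e k = [set v | k <= L v].
  by case/andP=> k_gt0 /ltnW k_le; rewrite Gk_levels ?k_gt0.
have G_top : Gk e alpha = [set v | alpha <= L v] by rewrite Gk_levels ?alpha_gt0 ?leqnn.
have not_clique k : 0 < k < alpha -> ~~ is_clique e (Gk e k).
  move=> k_lt; apply: contra (levels_nonempty k_lt) => /corners_clique.
  by rewrite G_low // corners_levels // => ->.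
split.
  split; rewrite ?G_top // => k k_lt; split; first exact: not_clique.
  by rewrite G_low // corners_levels // levels_nonempty.
move=> k /andP[k_gt0]; rewrite leq_eqVlt => /orP[/eqP -> | k_lt].
  rewrite /Xk G_top top_clique; apply/setP => v; rewrite !inE.
  by rewrite eqn_leq (andP (L_range v)).2.
have k_lt' : 0 < k < alpha by rewrite k_gt0.
by rewrite /Xk (negbTE (not_clique k k_lt')) G_low // corners_levels.
Qed.

End LevelFunction.
End Corners.

Lemma corners_preim (T1 T2 : finType) (e1 : rel T1) (e2 : rel T2) (f : T1 -> T2)
    (S : {set T2}) :
  bijective f -> (forall x y, e1 x y = e2 (f x) (f y)) ->
  corners e1 (f @^-1: S) = f @^-1: corners e2 S.
Proof.
move=> [g fK gK] fe.
have nbhd_preim v : nbhd e1 (f @^-1: S) v = f @^-1: nbhd e2 S (f v).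
  by apply/setP => w; rewrite !inE fe.
have proper_preim (A B : {set T2}) : (f @^-1: A \proper f @^-1: B) = (A \proper B).
  apply/idP/idP; last first.
    by apply: preimset_proper; apply/subsetP => y _; rewrite -[y]gK codom_f.
  have gfK (C : {set T2}) : g @^-1: (f @^-1: C) = C by apply/setP => y; rewrite !inE gK.
  move/(@preimset_proper _ _ g); rewrite !gfK; apply.
  by apply/subsetP => x _; rewrite -[x]fK codom_f.
apply/setP => v; rewrite !inE !strict_cornerE !inE; congr (_ && _).
apply/existsP/existsP => [[w /andP[]] | [w /andP[]]].
  by rewrite inE nbhd_preim nbhd_preim proper_preim => wS lt; exists (f w); rewrite wS.
by rewrite -{1}[w]gK => wS lt; exists (g w); rewrite inE wS !nbhd_preim gK proper_preim.
Qed.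

Section CornerRank.
Variables (T : finType) (e : rel T) (alpha : nat).
Hypothesis rank_alpha : corner_rank_is e alpha.

Lemma Xk_corners k : 0 < k < alpha -> Xk e k = corners e (Gk e k).
Proof. by case: rank_alpha => _ _ _ low /low[/negbTE nc _]; rewrite /Xk nc. Qed.

Lemma Xk_top : Xk e alpha = Gk e alpha.
Proof. by case: rank_alpha => _ _ cl _; rewrite /Xk cl. Qed.

Lemma Gk_succ_Xk k : 0 < k < alpha -> Gk e k.+1 = Gk e k :\: Xk e k.
Proof.
move=> k_lt; rewrite Gk_succ ?(andP k_lt).1 // Xk_corners // /rank_step.
by case: rank_alpha => _ _ _ /(_ k k_lt) [/negbTE ->].
Qed.

Lemma mem_Gk j k t : 0 < j <= alpha -> 0 < k <= alpha -> t \in Xk e j ->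
  (t \in Gk e k) = (k <= j).
Proof.
move=> /andP[j_gt0 j_le] /andP[k_gt0 k_le] tX.
case: leqP => [kj | jk].
  by apply: subsetP (Gk_subset _ _) _ (subsetP (Xk_sub e j) t tX); rewrite k_gt0.
have j_lt : 0 < j < alpha by rewrite j_gt0 (leq_trans jk k_le).
have : t \notin Gk e j.+1 by rewrite Gk_succ_Xk // inE tX.
by apply: contraNF; apply: subsetP; apply: Gk_subset.
Qed.

Lemma Xk_uniq i j t : 0 < i <= alpha -> 0 < j <= alpha ->
  t \in Xk e i -> t \in Xk e j -> i = j.
Proof.
move=> i_rng j_rng ti tj; apply/eqP.
rewrite eqn_leq -(mem_Gk j_rng i_rng tj) -(mem_Gk i_rng j_rng ti).
by rewrite !(subsetP (Xk_sub e _)).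
Qed.

Lemma Xk_cover t : exists2 j, 0 < j <= alpha & t \in Xk e j.
Proof.
have reach k : 0 < k <= alpha -> t \in Gk e k \/ exists2 j, 0 < j < k & t \in Xk e j.
  elim: k => // k IH /andP[_ k_le]; case: k IH k_le => [_ _ | k IH k_lt].
    by left; exact: in_setT.
  case: (IH (ltnW k_lt)) => [tG | [j /andP[j_gt0 j_lt] tX]]; last first.
    by right; exists j; rewrite // j_gt0 ltnW.
  case tX: (t \in Xk e k.+1); first by right; exists k.+1; rewrite //= ltnSn.
  by left; rewrite Gk_succ_Xk // inE tX tG.
case: rank_alpha => alpha_gt0 _ _ _.
have alpha_rng : 0 < alpha <= alpha by rewrite alpha_gt0 leqnn.
case: (reach alpha alpha_rng) => [tG | [j /andP[j_gt0 /ltnW j_le] tX]].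
  by exists alpha; rewrite // Xk_top.
by exists j; rewrite ?j_gt0.
Qed.

Lemma corners_pullback (T' : finType) (f : T' -> T) (L : T' -> nat) :
  bijective f -> (forall u, 0 < L u <= alpha) -> (forall u, f u \in Xk e (L u)) ->
  forall k, 0 < k < alpha ->
  corners (fun u v => e (f u) (f v)) [set u | k <= L u] = [set u | L u == k].
Proof.
move=> fbij L_rng fX k k_lt.
have k_rng : 0 < k <= alpha by case/andP: k_lt => -> /ltnW.
have -> : [set u | k <= L u] = f @^-1: Gk e k.
  by apply/setP => u; rewrite !inE (mem_Gk (L_rng u) k_rng (fX u)).
rewrite (corners_preim (e2 := e)) // -Xk_corners //; apply/setP => u; rewrite !inE.
by apply/idP/eqP => [fu | <-]; [exact: Xk_uniq (L_rng u) k_rng (fX u) fu | exact: fX].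
Qed.

End CornerRank.

Lemma graph_iso_sym (T1 T2 : finType) (e1 : rel T1) (e2 : rel T2) :
  graph_iso e1 e2 -> graph_iso e2 e1.
Proof.
move=> [f [[g fK gK] fe]]; exists g; split; first by exists f.
by move=> x y; rewrite fe !gK.
Qed.

Lemma graph_iso_trans (T1 T2 T3 : finType) (e1 : rel T1) (e2 : rel T2) (e3 : rel T3) :
  graph_iso e1 e2 -> graph_iso e2 e3 -> graph_iso e1 e3.
Proof.
move=> [f [fbij fe]] [g [gbij ge]]; exists (g \o f); split; first exact: bij_comp.
by move=> x y; rewrite fe ge.
Qed.

Lemma inj_surj_bij (T1 T2 : finType) (f : T1 -> T2) :
  injective f -> (forall y, exists x, f x = y) -> bijective f.
Proof.
move=> finj fsurj; apply: (inj_card_bij finj); rewrite -(card_codom finj).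
by apply/subset_leq_card/subsetP => y _; have [x <-] := fsurj y; exact: codom_f.
Qed.

Definition seq_strict_corner (T : Type) (s : seq T) (e : rel T) (P : pred T) (v : T) :=
  P v && has (fun w => P w && all (fun x => P x && e v x ==> e w x) s
                          && has (fun x => P x && e w x && ~~ e v x) s) s.

Lemma strict_corner_seqE (T : finType) (e : rel T) (s : seq T) (P : pred T) v :
  (forall x, x \in s) ->
  strict_corner e [set x | P x] v = seq_strict_corner s e P v.
Proof.
move=> s_full.
have sub w1 w2 : (nbhd e [set x | P x] w1 \subset nbhd e [set x | P x] w2) =
                 all (fun x => P x && e w1 x ==> e w2 x) s.
  apply/subsetP/allP => [le12 x _ | le12 x]; last first.
    by rewrite !inE => /andP[Px ex]; rewrite Px (implyP (le12 x (s_full x))) ?Px.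
  by apply/implyP => /andP[Px ex]; have := le12 x; rewrite !inE Px ex => /(_ isT) /andP[].
rewrite strict_cornerE inE /seq_strict_corner; congr (_ && _).
apply/existsP/hasP => [[w /andP[]] | [w _ /andP[/andP[Pw le] gt]]].
  rewrite inE properE !sub -has_predC => Pw /andP[le gt].
  exists w => //; rewrite Pw le /=; apply: sub_has gt => x /=.
  by rewrite negb_imply.
exists w; rewrite inE Pw properE !sub le -has_predC /=.
by apply: sub_has gt => x /=; rewrite negb_imply.
Qed.

Lemma seq_strict_corner_local (T : Type) (s : seq T) (e e' : rel T) (P : pred T) v :
  (forall x y, P x -> P y -> e x y = e' x y) ->
  seq_strict_corner s e P v = seq_strict_corner s e' P v.
Proof.
move=> ee'; rewrite /seq_strict_corner; case Pv: (P v) => //=.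
apply: eq_has => w; case Pw: (P w) => //=.
congr (_ && _); [apply: eq_all | apply: eq_has] => x; case Px: (P x) => //=;
  by rewrite !ee'.
Qed.

Fixpoint subseqs (T : Type) (s : seq T) : seq (seq T) :=
  if s is x :: s' then subseqs s' ++ map (cons x) (subseqs s') else [:: [::]].

Lemma filter_subseqs (T : eqType) (a : pred T) (s : seq T) : filter a s \in subseqs s.
Proof.
elim: s => [|x s IH] /=; first exact: mem_head.
by rewrite mem_cat; case: (a x); rewrite ?IH ?(map_f (cons x)) ?orbT.
Qed.

Definition code (v : H7v) : nat :=
  match v with a1 => 0 | a2 => 1 | b1 => 2 | b2 => 3 | c1 => 4 | c2 => 5 | d => 6 end.

(* The equality of [H7v] does not reduce under [vm_compute], that of [nat] does. *)
Lemma eq_code u v : (code u == code v) = (u == v).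
Proof. by apply/eqP/eqP => [|-> //]; case: u; case: v. Qed.

Definition H7_verts : seq H7v := [:: a1; a2; b1; b2; c1; c2; d].

Lemma mem_H7_verts u : u \in H7_verts.
Proof. by rewrite !inE -!eq_code; case: u. Qed.

Definition lev (v : H7v) : nat :=
  match v with a1 | a2 => 4 | b1 | b2 => 3 | c1 | c2 => 2 | d => 1 end.

Lemma lev_range u : 0 < lev u <= 4.
Proof. by case: u. Qed.

Definition upper (k : nat) : {set H7v} := [set v | k <= lev v].
Definition level (k : nat) : {set H7v} := [set v | lev v == k].

Definition adj_of (E : seq (H7v * H7v)) : rel H7v := fun x y =>
  (code x == code y) ||
  has (fun p => (code p.1 == code x) && (code p.2 == code y)
             || (code p.1 == code y) && (code p.2 == code x)) E.

Lemma adj_ofE E x y : adj_of E x y = (x == y) || ((x, y) \in E) || ((y, x) \in E).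
Proof.
rewrite /adj_of eq_code -orbA -!has_pred1 -has_predU; congr (_ || _).
by apply: eq_has => -[p1 p2]; rewrite /= !eq_code !xpair_eqE.
Qed.

Lemma H7_adjE : H7_adj =2 adj_of H7_edges.
Proof. by move=> x y; rewrite adj_ofE. Qed.

Definition stage_pairs (k : nat) : seq (H7v * H7v) :=
  [seq p <- [seq (u, v) | u <- H7_verts, v <- H7_verts] |
     (code p.1 < code p.2) && (minn (lev p.1) (lev p.2) == k)].

Lemma stage_pairs_minn (a : pred (H7v * H7v)) j p :
  p \in [seq q <- stage_pairs j | a q] -> minn (lev p.1) (lev p.2) = j.
Proof. by rewrite /stage_pairs !mem_filter => /and3P[_ /andP[_ /eqP]]. Qed.

(* Otherwise unification tries to evaluate the stage lists, which takes forever;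
   [vm_compute] ignores this. *)
Opaque stage_pairs.

Definition all_stage_pairs := stage_pairs 1 ++ stage_pairs 2 ++ stage_pairs 3 ++ stage_pairs 4.

Lemma adj_of_all_stage_pairs u v : adj_of all_stage_pairs u v.
Proof. by case: u; case: v; vm_compute. Qed.

Lemma adj_of_filter (r : rel H7v) : reflexive r -> symmetric r ->
  r =2 adj_of [seq p <- all_stage_pairs | r p.1 p.2].
Proof.
move=> rr rs u v; rewrite adj_ofE !mem_filter /= (rs v u) -orbA -andb_orr.
have := adj_of_all_stage_pairs u v; rewrite adj_ofE -orbA.
by case: eqVneq => [-> _ | _ /= ->]; rewrite ?rr ?andbT.
Qed.

Definition level_corners (r : rel H7v) (k : nat) : bool :=
  all (fun v => seq_strict_corner H7_verts r (fun x => k <= lev x) v == (lev v == k))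
    H7_verts.

Lemma level_cornersP r k : reflect (corners r (upper k) = level k) (level_corners r k).
Proof.
have memc v :
    (v \in corners r (upper k)) = seq_strict_corner H7_verts r (fun x => k <= lev x) v.
  by rewrite inE (strict_corner_seqE _ _ _ mem_H7_verts).
apply: (iffP allP) => [ok | Ec v _]; last by rewrite -memc Ec inE.
by apply/setP => v; rewrite memc inE; apply/eqP/ok/mem_H7_verts.
Qed.

Lemma level_corners_local r r' k :
  (forall x y, k <= lev x -> k <= lev y -> r x y = r' x y) ->
  level_corners r k = level_corners r' k.
Proof. by move=> rr'; apply: eq_all => v; rewrite (seq_strict_corner_local _ _ rr'). Qed.

Lemma level_corners_stage r k F E :
  r =2 adj_of (F ++ E) -> (forall p, p \in F -> minn (lev p.1) (lev p.2) < k) ->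
  level_corners (adj_of E) k = level_corners r k.
Proof.
move=> Er low; apply: level_corners_local => x y kx ky; rewrite Er !adj_ofE !mem_cat.
have notF a b : k <= lev a -> k <= lev b -> ((a, b) \in F) = false.
  by move=> ka kb; apply/negbTE/negP => /low /=; rewrite ltnNge leq_min ka kb.
by rewrite !notF.
Qed.

Definition swap (sa sb sc : bool) (v : H7v) : H7v :=
  match v with
  | a1 => if sa then a2 else a1 | a2 => if sa then a1 else a2
  | b1 => if sb then b2 else b1 | b2 => if sb then b1 else b2
  | c1 => if sc then c2 else c1 | c2 => if sc then c1 else c2
  | d => d
  end.

Lemma swapK sa sb sc : involutive (swap sa sb sc).
Proof. by case: sa; case: sb; case: sc; case. Qed.

Definition iso_by_swap (r : rel H7v) : bool :=
  has (fun sa => has (fun sb => has (fun sc =>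
    all (fun u => all (fun v =>
      r u v == adj_of H7_edges (swap sa sb sc u) (swap sa sb sc v)) H7_verts) H7_verts)
  [:: false; true]) [:: false; true]) [:: false; true].

Lemma graph_iso_swap r : iso_by_swap r -> graph_iso r H7_adj.
Proof.
case/hasP => sa _ /hasP[sb _ /hasP[sc _ /allP iso]].
exists (swap sa sb sc); split; first exact/inv_bij/swapK.
move=> u v; rewrite H7_adjE; apply/eqP.
exact: (allP (iso u (mem_H7_verts u)) v (mem_H7_verts v)).
Qed.

(* Stage k adds a subset of [stage_pairs k] and checks the corners at level k.
   The test is an [if], not [==>], so that [vm_compute] (call by value) really
   prunes the failing branches. *)
Fixpoint staged_search (ks : seq nat) (E : seq (H7v * H7v)) : bool :=
  if ks is k :: ks' then
    all (fun F => if level_corners (adj_of (F ++ E)) k then staged_search ks' (F ++ E)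
                  else true)
      (subseqs (stage_pairs k))
  else iso_by_swap (adj_of E).

Lemma staged_search_cons k ks E : staged_search (k :: ks) E =
  all (fun F => if level_corners (adj_of (F ++ E)) k then staged_search ks (F ++ E)
                else true)
    (subseqs (stage_pairs k)).
Proof. by []. Qed.

Lemma staged_search_H7 : staged_search [:: 3; 2; 1] (stage_pairs 4).
Proof. by vm_compute. Qed.

Definition H7_ranked (r : rel H7v) : bool :=
  [&& r a1 a2, level_corners r 3, level_corners r 2 & level_corners r 1].

Lemma H7_ranked_iso r : reflexive r -> symmetric r -> H7_ranked r -> graph_iso r H7_adj.
Proof.
move=> rr rs /and4P[r12 ok3 ok2 ok1].
pose R k := [seq p <- stage_pairs k | r p.1 p.2].
have S4 : stage_pairs 4 = [:: (a1, a2)] by vm_compute.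
have R4 : R 4 = stage_pairs 4 by rewrite /R S4 /= r12.
have Er : r =2 adj_of (R 1 ++ R 2 ++ R 3 ++ R 4).
  have := adj_of_filter rr rs; rewrite /all_stage_pairs /R.
  move: (stage_pairs 1) (stage_pairs 2) (stage_pairs 3) (stage_pairs 4) => s1 s2 s3 s4.
  by rewrite !filter_cat.
have ok3' : level_corners (adj_of (R 3 ++ R 4)) 3.
  rewrite (level_corners_stage (r := r) (F := R 1 ++ R 2)) // => [u v | p].
    by rewrite -catA; exact: Er.
  by rewrite mem_cat => /orP[] /stage_pairs_minn ->.
have ok2' : level_corners (adj_of (R 2 ++ R 3 ++ R 4)) 2.
  by rewrite (level_corners_stage (r := r) (F := R 1)) // => p /stage_pairs_minn ->.
have ok1' : level_corners (adj_of (R 1 ++ R 2 ++ R 3 ++ R 4)) 1.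
  by rewrite (level_corners_local (r' := r)) // => x y _ _; rewrite Er.
have := staged_search_H7.
rewrite -R4 staged_search_cons => /allP/(_ (R 3) (filter_subseqs _ _)).
rewrite ok3' staged_search_cons => /allP/(_ (R 2) (filter_subseqs _ _)).
rewrite ok2' staged_search_cons => /allP/(_ (R 1) (filter_subseqs _ _)).
rewrite ok1' => /graph_iso_swap [f [fbij fe]].
by exists f; split => // u v; rewrite Er fe.
Qed.

Lemma H7_corner_rank :
  corner_rank_is H7_adj 4 /\ forall k, 0 < k <= 4 -> Xk H7_adj k = level k.
Proof.
apply: (corner_rank_of_levels (L := lev)) => [v | | | k k_rng | k k_rng].
- exact: lev_range.
- apply/forall_inP => u; rewrite inE => lu; apply/forall_inP => v; rewrite inE => lv.
  by rewrite H7_adjE; case: u lu; case: v lv.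
- by apply/set0Pn; exists a1; rewrite inE.
- apply/level_cornersP; rewrite (level_corners_local (r' := adj_of H7_edges)).
    by case: k k_rng => [|[|[|[|]]]] //; vm_compute.
  by move=> x y _ _; exact: H7_adjE.
- by apply/set0Pn; case: k k_rng => [|[|[|[|]]]] // _; [exists d | exists c1 | exists b1];
    rewrite inE.
Qed.

Lemma H7_rank_card_vector : rank_card_vector H7_adj [:: 2; 2; 2; 1].
Proof.
have [rank_H7 Xk_H7] := H7_corner_rank.
exists 4; split => //; rewrite (_ : rev (iota 1 4) = [:: 4; 3; 2; 1]) //= !Xk_H7 //.
have -> : level 4 = [set a1; a2] by apply/setP => v; rewrite !inE -!eq_code; case: v.
have -> : level 3 = [set b1; b2] by apply/setP => v; rewrite !inE -!eq_code; case: v.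
have -> : level 2 = [set c1; c2] by apply/setP => v; rewrite !inE -!eq_code; case: v.
have -> : level 1 = [set d] by apply/setP => v; rewrite !inE -!eq_code; case: v.
by rewrite !cards2 cards1 -!eq_code.
Qed.

Lemma H7_level_bijection (T : finType) (e : rel T) :
  corner_rank_is e 4 -> #|Xk e 4| = 2 -> #|Xk e 3| = 2 -> #|Xk e 2| = 2 -> #|Xk e 1| = 1 ->
  exists2 f : H7v -> T, bijective f & forall u, f u \in Xk e (lev u).
Proof.
move=> rank_e /eqP/cards2P[x1 [x2 [nx X4]]] /eqP/cards2P[y1 [y2 [ny X3]]].
move=> /eqP/cards2P[z1 [z2 [nz X2]]] /eqP/cards1P[w X1].
pose f u := match u with
  | a1 => x1 | a2 => x2 | b1 => y1 | b2 => y2 | c1 => z1 | c2 => z2 | d => w end.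
have fX u : f u \in Xk e (lev u).
  by case: u; rewrite /= ?X4 ?X3 ?X2 ?X1 !inE eqxx ?orbT.
exists f => //; apply: inj_surj_bij => [u v fuv | t].
  have := Xk_uniq rank_e (lev_range u) (lev_range v) (fX u); rewrite fuv => /(_ (fX v)).
  by case: u fuv; case: v => //= fuv _; move: nx ny nz; rewrite fuv eqxx.
have [j /andP[j_gt0 j_le] tX] := Xk_cover rank_e t.
case: j j_gt0 j_le tX => [|[|[|[|[|]]]]] // _ _.
- by rewrite X1 inE => /eqP ->; exists d.
- by rewrite X2 !inE => /orP[] /eqP ->; [exists c1 | exists c2].
- by rewrite X3 !inE => /orP[] /eqP ->; [exists b1 | exists b2].
- by rewrite X4 !inE => /orP[] /eqP ->; [exists a1 | exists a2].
Qed.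

Lemma rank_card_vector_iso (T : finType) (e : rel T) : reflexive e -> symmetric e ->
  rank_card_vector e [:: 2; 2; 2; 1] -> graph_iso e H7_adj.
Proof.
move=> er es [alpha [rank_e vec]].
have alpha4 : alpha = 4 by have := congr1 size vec; rewrite size_map size_rev size_iota.
subst alpha; move: vec; rewrite (_ : rev (iota 1 4) = [:: 4; 3; 2; 1]) //=.
move=> /esym[X4 X3 X2 X1]; have [f fbij fX] := H7_level_bijection rank_e X4 X3 X2 X1.
have ranked : H7_ranked (fun u v => e (f u) (f v)).
  have ok k : 0 < k < 4 -> level_corners (fun u v => e (f u) (f v)) k.
    move=> k_lt; apply/level_cornersP.
    by have := corners_pullback rank_e fbij lev_range fX k_lt.
  rewrite /H7_ranked !ok // !andbT /=.
  have := fX a1; have := fX a2; rewrite /= Xk_top //.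
  by case: rank_e => _ _ /forall_inP cl _ fa2 /cl /forall_inP; apply.
apply: graph_iso_trans (H7_ranked_iso _ _ ranked) => [|u | u v].
- by apply: graph_iso_sym; exists f.
- exact: er.
- exact: es.
Qed.

Theorem lemma3p28 :
  rank_card_vector H7_adj [:: 2; 2; 2; 1] /\
  (forall (T : finType) (e : rel T),
      reflexive e -> symmetric e -> (0 < #|T|)%N ->
      rank_card_vector e [:: 2; 2; 2; 1] ->
      graph_iso e H7_adj).
Proof.
split; first exact: H7_rank_card_vector.
(* Nonemptiness of [T] already follows from the rank condition. *)
by move=> T e er es _; exact: rank_card_vector_iso.
Qed.
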